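(* Assume the setting and hypotheses of the context (continuity of the regularization at $P$ w.r.t. $d$, $d(P_n,P)=o_P(r_n^{-1})$ with $(r_n)$ positive diverging, and the majorants $\bar B,\bar\delta$, grids $\mathcal{G}_n$ and choice $\tilde k_n$ defined there). Suppose moreover that $k\mapsto\bar\delta_k(t)$ and $k\mapsto\bar B_k(P)$ are continuous, that the sets $$\mathcal{G}_n^+=\{k\in\mathcal{G}_n:\bar\delta_k(r_n^{-1})\ge\bar B_k(P)\},\qquad\mathcal{G}_n^-=\{k\in\mathcal{G}_n:\bar\delta_k(r_n^{-1})\le\bar B_k(P)\}$$ are non-empty, and that $$\frac{\min_{k\in\mathcal{G}_n^+}\bar\delta_k(r_n^{-1})}{\max_{k\in\mathcal{G}_n^-}\bar\delta_k(r_n^{-1})}=O(1).$$ Then $$\|\psi_{\tilde k_n}(P_n)-\psi(P)\|_\Theta=O_P\left(\inf_{k\in\mathbb{R}_+}\{\bar\delta_k(r_n^{-1})+\bar B_k(P)\}\right).$$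
   Context: Setting: $\mathbb{Z}\subseteq\mathbb{R}^d$; data IID with law $P\in\mathcal{M}$; $\mathbf{P}$ the product probability on $\mathbb{Z}^\infty$ (to which $o_P,O_P$ refer); $ca(\mathbb{Z})$ signed Borel measures of finite variation; $\mathcal{D}$ discretely supported probability measures; $P_n$ the empirical distribution. $\mathcal{M}$ a set of Borel probability measures, $\psi:\mathcal{M}\to\Theta$, $(\Theta,\|\cdot\|_\Theta)$ a normed space, $\mathbb{K}\subseteq\mathbb{R}_+$ unbounded above. A regularization is a family $(\psi_k)_{k\in\mathbb{K}}$, $\psi_k:\mathbb{D}_\psi\subseteq ca(\mathbb{Z})\to\Theta$, $\mathbb{D}_\psi\supseteq\mathcal{M}\cup\mathcal{D}$, with $\|\psi_k(Q)-\psi(Q)\|_\Theta\to0$ for all $Q\in\mathcal{M}$. A modulus of continuity is a continuous non-decreasing $f:\mathbb{R}_+\to\mathbb{R}_+$ with $f(t)=0$ iff $t=0$; the regularization is continuous at $P$ w.r.t. a distance $d$ if there are moduli $(\delta_k)$ with $\|\psi_k(P')-\psi_k(P)\|_\Theta\le\delta_k(d(P',P))$ for all $k$ and $P'\in\mathbb{D}_\psi$. Assume this, and that $(r_n)$ is a positive diverging sequence with $d(P_n,P)=o_P(r_n^{-1})$. $k\mapsto\bar B_k(P)$ is non-increasing $\mathbb{R}_+\to\mathbb{R}_+$ with $\bar B_k(P)\ge\|\psi_k(P)-\psi(P)\|_\Theta$ and $\bar B_k(P)\to0$; for each $n$, $k\mapsto\bar\delta_k(r_n^{-1})$ is non-decreasing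 $\mathbb{R}_+\to\mathbb{R}_+$ with $\bar\delta_k(r_n^{-1})\ge\delta_k(r_n^{-1})$. $\mathcal{G}_n$ is a finite subset of $\mathbb{K}$, $\mathcal{L}_n=\{k\in\mathcal{G}_n:\|\psi_k(P_n)-\psi_{k'}(P_n)\|_\Theta\le4\bar\delta_{k'}(r_n^{-1})\ \forall k'\ge k,\ k'\in\mathcal{G}_n\}$, and $\tilde k_n=\min\mathcal{L}_n$. *)

From HB Require Import structures.
From mathcomp Require Import all_boot all_order all_algebra.
From mathcomp Require Import all_classical all_reals all_analysis.
Set Implicit Arguments. Unset Strict Implicit. Unset Printing Implicit Defensive.
Import Order.TTheory GRing.Theory Num.Theory.
Import numFieldNormedType.Exports.
Local Open Scope classical_set_scope.
Local Open Scope ring_scope.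

Section Defs.
Context {R : realType}.

Section SetFun.
Context {dT : measure_display} {T : measurableType dT}.

Definition is_ca (Q : set T -> R) : Prop :=
  exists c : {charge set T -> \bar R}, forall A, (Q A)%:E = c A.

Definition is_prob (Q : set T -> R) : Prop :=
  exists p : probability T R, forall A, (Q A)%:E = p A.

Definition is_discrete_prob (Q : set T -> R) : Prop :=
  exists (x : nat -> T) (w : nat -> R),
    (forall i, 0 <= w i) /\
    (series w @ \oo --> (1 : R)) /\
    (forall A, series (fun i => w i * \1_A (x i)) @ \oo --> Q A).

Definition empirical {dO : measure_display} {O : measurableType dO}
  (X : nat -> O -> T) (n : nat) (w : O) : set T -> R :=
  fun A => n%:R^-1 * \sum_(i < n) \1_A (X i w).

End SetFun.

Section Prob.
Context {dO : measure_display} {O : measurableType dO} (Pr : probability O R).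

Definition Pout (A : set O) : \bar R :=
  ereal_inf [set Pr B | B in [set B | measurable B /\ A `<=` B]].

Definition is_oP (Y : nat -> O -> R) (a : nat -> R) : Prop :=
  forall eps : R, 0 < eps -> forall eta : R, 0 < eta ->
    \forall n \near \oo, (Pout [set w | (eps * a n < `|Y n w|)%R] <= eta%:E)%E.

Definition is_OP (Y : nat -> O -> R) (a : nat -> R) : Prop :=
  forall eta : R, 0 < eta -> exists M : R,
    \forall n \near \oo, (Pout [set w | (M * a n < `|Y n w|)%R] <= eta%:E)%E.

Definition iid_with_law {dT : measure_display} {T : measurableType dT}
  (X : nat -> O -> T) (Q : set T -> R) : Prop :=
  (forall i, measurable_fun setT (X i)) /\
  (forall i A, measurable A -> Pr (X i @^-1` A) = (Q A)%:E) /\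
  (forall (I : seq nat) (A : nat -> set T), uniq I ->
     (forall i, measurable (A i)) ->
     Pr (\bigcap_(i in [set` I]) (X i @^-1` A i)) =
       (\prod_(i <- I) fine (Pr (X i @^-1` A i)))%:E).

End Prob.

Definition modulus (f : R -> R) : Prop :=
  {within `[0, +oo[, continuous f} /\
  {in `[0, +oo[ &, {homo f : s t / s <= t}} /\
  (forall t, 0 <= t -> 0 <= f t) /\
  (forall t, 0 <= t -> (f t = 0 <-> t = 0)).

Definition seqmin (s : seq R) : R := foldr Num.min (head 0 s) s.
Definition seqmax (s : seq R) : R := foldr Num.max (head 0 s) s.

End Defs.

From HB Require Import structures.
From mathcomp Require Import all_boot all_order all_algebra.
From mathcomp Require Import all_classical all_reals all_analysis.
From mathcomp Require Import lra.
Import Order.TTheory GRing.Theory Num.Theory.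
Import numFieldNormedType.Exports.
Local Open Scope classical_set_scope.
Local Open Scope ring_scope.

(* Outside an event of small outer probability, d(P_n, P) <= 1/r_n, and then
   every psi_k(P_n) with k in the grid is within dbar_k + Bbar_k of psi(P); from
   there on the argument is deterministic (Lepski's method).  A grid point k+
   with Bbar_k+ <= dbar_k+ lies in the Lepski set, because for k' >= k+ both
   errors are dominated by 2 dbar_k'.  Hence the selected k~ <= k+ is within
   4 dbar_k+ of psi_k+(P_n), and the error is at most 6 dbar_k+.  The ratio
   hypothesis gives dbar_k+ <= C dbar_k- for a grid point k- with
   dbar_k- <= Bbar_k-, and by monotonicity on either side of k- we have
   dbar_k- <= dbar_k + Bbar_k for every k >= 0. *)

Section FoldrExtrema.
Context {d : Order.disp_t} {T : orderType d}.
Local Open Scope order_scope.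

Lemma foldr_min_le (x0 x : T) s : x \in s -> foldr Order.min x0 s <= x.
Proof. by elim: s => //= a s IH /predU1P[->|/IH xs]; rewrite ge_min ?lexx ?xs ?orbT. Qed.

Lemma foldr_min_in (x0 : T) s : foldr Order.min x0 s \in x0 :: s.
Proof.
elim: s => [|a s IH] /=; first exact: mem_head.
rewrite minEle; case: ifP => _; first by rewrite !inE eqxx orbT.
by move: IH; rewrite !inE => /orP[]->; rewrite ?orbT.
Qed.

Lemma foldr_max_in (x0 : T) s : foldr Order.max x0 s \in x0 :: s.
Proof.
elim: s => [|a s IH] /=; first exact: mem_head.
rewrite maxEle; case: ifP => _; last by rewrite !inE eqxx orbT.
by move: IH; rewrite !inE => /orP[]->; rewrite ?orbT.
Qed.

End FoldrExtrema.

Section SeqExtrema.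
Context {R : realType}.

Lemma seqmin_le (s : seq R) x : x \in s -> seqmin s <= x.
Proof. exact: foldr_min_le. Qed.

Lemma seqmin_map_attained (f : R -> R) (s : seq R) x : x \in s ->
  exists2 k, k \in s & seqmin [seq f k | k <- s] = f k.
Proof.
case: s => // a s _; apply/mapP; set fs := [seq f k | k <- a :: s]; rewrite /seqmin.
by have /predU1P[->|] := foldr_min_in (head 0 fs) fs; first exact: mem_head.
Qed.

Lemma seqmax_map_attained (f : R -> R) (s : seq R) x : x \in s ->
  exists2 k, k \in s & seqmax [seq f k | k <- s] = f k.
Proof.
case: s => // a s _; apply/mapP; set fs := [seq f k | k <- a :: s]; rewrite /seqmax.
by have /predU1P[->|] := foldr_max_in (head 0 fs) fs; first exact: mem_head.
Qed.

Lemma seqmin_in (s : seq R) x : x \in s -> seqmin s \in s.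
Proof.
move=> xs; have [k ks] := seqmin_map_attained id _ _ xs.
by rewrite map_id => ->.
Qed.

End SeqExtrema.

Arguments seqmin_le {R s x}.
Arguments seqmin_in {R s x}.
Arguments seqmin_map_attained {R} f {s x}.
Arguments seqmax_map_attained {R} f {s x}.

Lemma crossing_le_inf {R : realType} (f g : R -> R) x :
  {in `[0, +oo[ &, {homo f : s t / s <= t}} ->
  {in `[0, +oo[ &, {homo g : s t /~ s <= t}} ->
  (forall k, 0 <= k -> 0 <= f k) -> (forall k, 0 <= k -> 0 <= g k) ->
  0 <= x -> f x <= g x -> f x <= inf [set f k + g k | k in [set k | 0 <= k]].
Proof.
move=> f_homo g_homo f_ge0 g_ge0 x_ge0 fxgx.
apply: lb_le_inf; first by exists (f 0 + g 0); exists 0 => //=.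
have in0 (y : R) : 0 <= y -> y \in `[0, +oo[ by rewrite in_itv /= andbT.
move=> _ [k /= k_ge0 <-].
have := f_ge0 k k_ge0; have := g_ge0 k k_ge0.
case: (leP k x) => [kx | /ltW xk].
- by have := g_homo _ _ (in0 _ x_ge0) (in0 _ k_ge0) kx; lra.
- by have := f_homo _ _ (in0 _ x_ge0) (in0 _ k_ge0) xk; lra.
Qed.

Section Lepski.
Context {R : realType} {V : normedModType R}.

Definition lepski_set (est : R -> V) (G : seq R) (v : R -> R) : seq R :=
  [seq k <- G | all (fun k' => (k <= k') ==> (`|est k - est k'| <= 4 * v k')) G].

Definition lepski_choice (est : R -> V) (G : seq R) (v : R -> R) : R :=
  seqmin (lepski_set est G v).

Variables (est : R -> V) (theta : V) (G : seq R) (v B : R -> R).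
Hypothesis G_ge0 : {in G, forall k, 0 <= k}.
Hypothesis v_homo : {in `[0, +oo[ &, {homo v : s t / s <= t}}.
Hypothesis B_homo : {in `[0, +oo[ &, {homo B : s t /~ s <= t}}.
Hypothesis est_err : {in G, forall k, `|est k - theta| <= v k + B k}.
Hypothesis v_ge0 : forall k, 0 <= k -> 0 <= v k.
Hypothesis B_ge0 : forall k, 0 <= k -> 0 <= B k.
Hypothesis v_gt0 : {in G, forall k, 0 < v k}.

Let in_Rplus k : k \in G -> k \in `[0, +oo[.
Proof. by move=> kG; rewrite in_itv /= andbT G_ge0. Qed.

Lemma lepski_set_balanced k : k \in G -> B k <= v k -> k \in lepski_set est G v.
Proof.
move=> kG Bv; rewrite mem_filter kG andbT.
apply/allP => k' k'G; apply/implyP => kk'.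
have := ler_distD theta (est k) (est k'); rewrite (distrC theta).
have := est_err _ kG; have := est_err _ k'G.
have := v_homo _ _ (in_Rplus _ kG) (in_Rplus _ k'G) kk'.
have := B_homo _ _ (in_Rplus _ k'G) (in_Rplus _ kG) kk'.
lra.
Qed.

Lemma lepski_choice_err k : k \in G -> B k <= v k ->
  `|est (lepski_choice est G v) - theta| <= 6 * v k.
Proof.
move=> kG Bv; have kL := lepski_set_balanced _ kG Bv.
have := seqmin_in kL; rewrite -/(lepski_choice est G v) mem_filter.
move=> /andP[/allP/(_ k kG)/implyP/(_ (seqmin_le kL)) close _].
have := ler_distD (est k) (est (lepski_choice est G v)) theta.
have := est_err _ kG; lra.
Qed.

Lemma lepski_oracle_inequality (C : R) k_plus k_minus :
  k_plus \in G -> B k_plus <= v k_plus -> k_minus \in G -> v k_minus <= B k_minus ->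
  `| seqmin [seq v k | k <- G & B k <= v k] / seqmax [seq v k | k <- G & v k <= B k] | <= C ->
  `|est (lepski_choice est G v) - theta| <=
    6 * C * inf [set v k + B k | k in [set k : R | 0 <= k]].
Proof.
move=> kpG kpB kmG kmB ratio.
have kp_in : k_plus \in [seq k <- G | B k <= v k] by rewrite mem_filter kpB.
have km_in : k_minus \in [seq k <- G | v k <= B k] by rewrite mem_filter kmB.
have [kp] := seqmin_map_attained v kp_in; rewrite mem_filter => /andP[kpB' kpG'] minE.
have [km] := seqmax_map_attained v km_in; rewrite mem_filter => /andP[kmB' kmG'] maxE.
have C_ge0 : 0 <= C := le_trans (normr_ge0 _) ratio.
have vkp_le : v kp <= C * v km.
  have vkm_gt0 := v_gt0 _ kmG'.
  have ratio_ge0 : 0 <= v kp / v km by rewrite divr_ge0 ?v_ge0 ?G_ge0 ?ltW.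
  by move: ratio; rewrite minE maxE ger0_norm // ler_pdivrMr // mulrC.
have := lepski_choice_err _ kpG' kpB'.
have vkm_le := @crossing_le_inf _ v B km v_homo B_homo v_ge0 B_ge0 (G_ge0 _ kmG') kmB'.
have := ler_wpM2l C_ge0 vkm_le.
lra.
Qed.

End Lepski.

Lemma series_cvg_finite_support {R : realType} (u : nat -> R) n :
  (forall i, (n <= i)%N -> u i = 0) -> series u @ \oo --> \sum_(i < n) u i.
Proof.
move=> u0; apply: cvg_near_cst; near=> N.
have nN : (n <= N)%N by near: N; exact: nbhs_infty_ge.
rewrite /series /= (big_cat_nat (leq0n n) nN) /= big_mkord.
by rewrite [X in _ + X]big_nat_cond [X in _ + X]big1 ?addr0 // => i /andP[/andP[/u0]].
Unshelve. all: by end_near.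
Qed.

Lemma empirical_discrete_prob {R : realType}
  {dT : measure_display} {T : measurableType dT}
  {dO : measure_display} {O : measurableType dO}
  (X : nat -> O -> T) n w : (0 < n)%N -> is_discrete_prob (empirical (R := R) X n w).
Proof.
move=> n_gt0; pose wt i : R := if (i < n)%N then n%:R^-1 else 0.
have wt0 i : (n <= i)%N -> wt i = 0 by rewrite /wt ltnNge => ->.
exists (fun i => X i w), wt; split; [|split].
- by move=> i; rewrite /wt; case: ifP; rewrite ?invr_ge0 ?ler0n.
- have <- : \sum_(i < n) wt i = 1.
    rewrite (eq_bigr (fun=> n%:R^-1)) => [|i _]; last by rewrite /wt ltn_ord.
    by rewrite sumr_const card_ord -[_ *+ n]mulr_natr mulVf // pnatr_eq0 -lt0n.
  exact: series_cvg_finite_support.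
- move=> A; rewrite /empirical mulr_sumr.
  rewrite (eq_bigr (fun i : 'I_n => wt i * \1_A (X i w))) => [|i _]; last by rewrite /wt ltn_ord.
  by apply: series_cvg_finite_support => i /wt0 ->; rewrite mul0r.
Qed.

Lemma le_Pout {R : realType} {dO : measure_display} {O : measurableType dO}
  (Pr : probability O R) (A B : set O) : A `<=` B -> (Pout Pr A <= Pout Pr B)%E.
Proof.
move=> AB; apply: ereal_inf_le_tmp => _ [C [mC BC] <-].
by exists C => //; split => //; exact: subset_trans BC.
Qed.

Lemma modulus_gt0 {R : realType} (f : R -> R) t : modulus f -> 0 < t -> 0 < f t.
Proof.
move=> [_ [_ [f_ge0 f_eq0]]] t_gt0; rewrite lt0r f_ge0 ?ltW // andbT.
by apply/eqP => /(f_eq0 _ (ltW t_gt0)) t0; rewrite t0 ltxx in t_gt0.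
Qed.

Theorem proposition2
  (R : realType)
  (dT : measure_display) (T : measurableType dT)          (* sample space Z *)
  (dO : measure_display) (O : measurableType dO)          (* underlying probability space *)
  (Pr : probability O R)
  (Mset : set (set T -> R))                               (* the model M *)
  (Dpsi : set (set T -> R))                               (* the domain D_psi *)
  (Theta : normedModType R)
  (psi : (set T -> R) -> Theta)
  (K : set R)
  (psik : R -> (set T -> R) -> Theta)                     (* psik k = psi_k *)
  (dist : (set T -> R) -> (set T -> R) -> R)             (* the distance d *)
  (P : set T -> R)
  (X : nat -> O -> T)                                     (* the data *)
  (delta : R -> R -> R)                                   (* moduli delta_k *)
  (r : nat -> R)
  (Bbar : R -> R)                                         (* k |-> Bbar_k(P) *)
  (dbar : R -> R -> R)                                    (* dbar k t = dbar_k(t) *)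
  (G : nat -> seq R)                                      (* grids G_n *)
  (* the model and the domain of the regularization *)
  (hM : Mset `<=` [set Q | is_prob Q])
  (hP : Mset P)
  (hDca : Dpsi `<=` [set Q | is_ca Q])
  (hDM : Mset `<=` Dpsi)
  (hDD : [set Q | is_discrete_prob Q] `<=` Dpsi)
  (* K is a subset of R_+ unbounded above *)
  (hK0 : K `<=` [set k | 0 <= k])
  (hKunb : forall M : R, exists k, K k /\ M < k)
  (* (psik)_k is a regularization of psi *)
  (hreg : forall Q, Mset Q -> forall eps : R, 0 < eps ->
      exists k0 : R, forall k, K k -> k0 <= k -> `|psik k Q - psi Q| < eps)
  (* IID data with law P *)
  (hiid : iid_with_law Pr X P)
  (* d is a distance on D_psi *)
  (hd0 : forall Q Q', Dpsi Q -> Dpsi Q' -> 0 <= dist Q Q')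
  (hdrefl : forall Q, Dpsi Q -> dist Q Q = 0)
  (hdsym : forall Q Q', Dpsi Q -> Dpsi Q' -> dist Q Q' = dist Q' Q)
  (hdtri : forall Q1 Q2 Q3, Dpsi Q1 -> Dpsi Q2 -> Dpsi Q3 ->
      dist Q1 Q3 <= dist Q1 Q2 + dist Q2 Q3)
  (* continuity of the regularization at P w.r.t. d *)
  (hmod : forall k, K k -> modulus (delta k))
  (hcont : forall k Q, K k -> Dpsi Q -> `|psik k Q - psik k P| <= delta k (dist Q P))
  (* (r_n) positive diverging, d(P_n, P) = o_P(1 / r_n) *)
  (hrpos : forall n, 0 < r n)
  (hrdiv : forall M : R, \forall n \near \oo, M < r n)
  (hrate : is_oP Pr (fun n w => dist (empirical X n w) P) (fun n => (r n)^-1))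
  (* the bias majorant Bbar *)
  (hB0 : forall k, 0 <= k -> 0 <= Bbar k)
  (hBmono : {in `[0, +oo[ &, {homo Bbar : s t /~ s <= t}})
  (hBmaj : forall k, K k -> `|psik k P - psi P| <= Bbar k)
  (hBlim : forall eps : R, 0 < eps -> exists k0 : R, forall k, k0 <= k -> Bbar k < eps)
  (hBcont : {within `[0, +oo[, continuous Bbar})
  (* the variance majorant dbar *)
  (hdb0 : forall n k, 0 <= k -> 0 <= dbar k (r n)^-1)
  (hdbmono : forall n, {in `[0, +oo[ &, {homo (fun k => dbar k (r n)^-1) : s t / s <= t}})
  (hdbmaj : forall n k, K k -> delta k (r n)^-1 <= dbar k (r n)^-1)
  (hdbcont : forall n, {within `[0, +oo[, continuous (fun k => dbar k (r n)^-1)})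
  (* the grids *)
  (hG : forall n k, k \in G n -> K k)
  (hGplus : forall n, exists k, k \in G n /\ Bbar k <= dbar k (r n)^-1)
  (hGminus : forall n, exists k, k \in G n /\ dbar k (r n)^-1 <= Bbar k)
  (hratio : exists C : R, \forall n \near \oo,
      `| seqmin [seq dbar k (r n)^-1 | k <- G n & Bbar k <= dbar k (r n)^-1]
         / seqmax [seq dbar k (r n)^-1 | k <- G n & dbar k (r n)^-1 <= Bbar k] | <= C) :
  let Pn := fun n w => empirical X n w in
  let ktilde := fun n w =>
    seqmin [seq k <- G n | all (fun k' => (k <= k') ==>
              (`|psik k (Pn n w) - psik k' (Pn n w)| <= 4 * dbar k' (r n)^-1)) (G n)] in
  is_OP Pr (fun n w => `|psik (ktilde n w) (Pn n w) - psi P|)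
           (fun n => inf [set dbar k (r n)^-1 + Bbar k | k in [set k : R | 0 <= k]]).
Proof.
move=> Pn ktilde eta eta_gt0.
have [C ratioC] := hratio.
exists (6 * C).
apply: filterS3 ratioC (hrate 1 ltr01 eta eta_gt0) (nbhs_infty_ge 1).
move=> n ratio_n rate_n n_ge1; apply: le_trans rate_n; apply: le_Pout => w /=.
rewrite !ltNge; apply: contra; rewrite mul1r normr_id => dist_le.
have PnD : Dpsi (Pn n w) := hDD _ (empirical_discrete_prob X n w n_ge1).
have PD : Dpsi P := hDM _ hP.
rewrite ger0_norm ?hd0 // in dist_le.
have delta_le k : K k -> delta k (dist (Pn n w) P) <= dbar k (r n)^-1.
  move=> Kk; apply: le_trans (hdbmaj n k Kk).
  by apply: (hmod k Kk).2.1; rewrite // in_itv /= andbT ?hd0 // invr_ge0 ltW.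
have [kp [kpG kpB]] := hGplus n.
have [km [kmG kmB]] := hGminus n.
apply: (@lepski_oracle_inequality _ _ (fun k => psik k (Pn n w)) (psi P) (G n)
          (fun k => dbar k (r n)^-1) Bbar _ (hdbmono n) hBmono _ (hdb0 n) hB0 _ C kp km) => //.
- by move=> k /(hG n)/hK0.
- move=> k /(hG n) Kk; apply: le_trans (ler_distD (psik k P) _ _) _.
  by apply: lerD (hBmaj k Kk); exact: le_trans (hcont k _ Kk PnD) (delta_le k Kk).
- move=> k /(hG n) Kk; apply: lt_le_trans (hdbmaj n k Kk).
  by apply: modulus_gt0 (hmod k Kk) _; rewrite invr_gt0.
Qed.
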